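(* Let $K$ be a field of characteristic not equal to $2$ and let $S$ be a (unital, not necessarily associative) $K$-algebra with a pseudo-degree function $\chi$. Let $a\in N(S)$ be such that $C_S(a)$ satisfies condition $D(\ell)$ for some $\ell>0$, and let $b\in C_S(a)\cap N_l(S)$. Then there exists a nonzero polynomial $P(s,t)\in K[s,t]$ such that $P(a,b)=0$, where for $P(s,t)=\sum_{i=0}^k f_i(s)t^i$ with $f_i\in K[s]$ one sets $P(a,b)=\sum_{i=0}^k f_i(a)b^i$.
   Context: All algebras are unital but not necessarily associative, and $K$ is embedded in $S$ via the unit. $N_l(S)$ is the set of $x\in S$ with $x(yz)=(xy)z$ for all $y,z\in S$ (so powers of an element of $N_l(S)$ are well defined). The nucleus $N(S)$ is the set of $x\in S$ with $x(yz)=(xy)z$, $(yx)z=y(xz)$ and $(yz)x=y(zx)$ for all $y,z\in S$. $C_S(a)$ denotes the set of elements of $S$ commuting with $a$. A pseudo-degree function on $S$ is a map $\chi:S\to\mathbb{Z}\cup\{-\infty\}$ such that $\chi(x)=-\infty$ iff $x=0$; $\chi(xy)=\chi(x)+\chi(y)$; and $\chi(x+y)\le\max(\chi(x),\chi(y))$ for all $x,y\in S$. For a positive integer $\ell$, a subalgebra $B\subseteq S$ satisfies condition $D(\ell)$ if $\chi(x)\ge0$ for all nonzero $x\in B$, and whenever $b_1,\dots,b_{\ell+1}\in B$ all have the same value under $\chi$, there exist $\alpha_1,\dots,\alpha_{\ell+1}\in K$, not all zero, with $\chi\left(\sum_{i=1}^{\ell+1}\alpha_ib_i\right)<\chi(b_1)$.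 *)

From HB Require Import structures.
From mathcomp Require Import all_boot all_order all_algebra.
Set Implicit Arguments. Unset Strict Implicit. Unset Printing Implicit Defensive.
Import Order.TTheory GRing.Theory Num.Theory.
Local Open Scope ring_scope.

Section NonAssoc.
Variables (K : fieldType) (S : lmodType K) (mul : S -> S -> S) (one : S).

Definition is_unital_algebra : Prop :=
  [/\ forall (k : K) (x y z : S), mul (k *: x + y) z = k *: mul x z + mul y z,
      forall (k : K) (x y z : S), mul x (k *: y + z) = k *: mul x y + mul x z,
      forall x, mul one x = x
    & forall x, mul x one = x].

Definition left_nucleus (x : S) : Prop :=
  forall y z, mul x (mul y z) = mul (mul x y) z.

Definition nucleus (x : S) : Prop :=
  forall y z, [/\ mul x (mul y z) = mul (mul x y) z,
                  mul (mul y x) z = mul y (mul x z)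
                & mul (mul y z) x = mul y (mul z x)].

Definition centralizer (a : S) : pred S := fun x => mul x a == mul a x.

(* powers: x^0 = 1, x^(n+1) = x * x^n (well defined for x in N_l(S)) *)
Fixpoint npow (x : S) (n : nat) : S :=
  if n is n'.+1 then mul x (npow x n') else one.

Definition peval1 (f : {poly K}) (a : S) : S :=
  \sum_(j < size f) f`_j *: npow a j.

(* P(a,b) = sum_i f_i(a) b^i for P = sum_i f_i(s) t^i in K[s][t] = K[s,t] *)
Definition peval2 (P : {poly {poly K}}) (a b : S) : S :=
  \sum_(i < size P) mul (peval1 P`_i a) (npow b i).

End NonAssoc.

(* Z ∪ {-oo}, encoded as option int with None = -oo *)
Definition zbot := option int.
Definition zle (x y : zbot) : bool :=
  match x, y with
  | None, _ => true
  | Some _, None => false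
  | Some m, Some n => (m <= n)%R
  end.
Definition zlt (x y : zbot) : bool := zle x y && (x != y).
Definition zmax (x y : zbot) : zbot := if zle x y then y else x.
Definition zadd (x y : zbot) : zbot :=
  match x, y with
  | Some m, Some n => Some (m + n)%R
  | _, _ => None
  end.

Section PseudoDeg.
Variables (K : fieldType) (S : lmodType K) (mul : S -> S -> S).

Definition pseudo_degree (chi : S -> zbot) : Prop :=
  [/\ forall x, chi x = None <-> x = 0,
      forall x y, chi (mul x y) = zadd (chi x) (chi y)
    & forall x y, zle (chi (x + y)) (zmax (chi x) (chi y))].

Definition condD (chi : S -> zbot) (B : pred S) (l : nat) : Prop :=
  (forall x, x \in B -> x != 0 -> zle (Some 0%R) (chi x)) /\
  (forall bs : 'I_l.+1 -> S,
     (forall i, bs i \in B) -> (forall i, bs i != 0) ->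
     (forall i, chi (bs i) = chi (bs ord0)) ->
     exists alpha : 'I_l.+1 -> K, (exists i, alpha i != 0) /\
       zlt (chi (\sum_i alpha i *: bs i)) (chi (bs ord0))).
End PseudoDeg.

From HB Require Import structures.
From mathcomp Require Import all_boot all_order all_algebra.
From mathcomp Require Import zify.
Set Implicit Arguments. Unset Strict Implicit.
Import GRing.Theory.
Local Open Scope ring_scope.

(* Since a lies in the nucleus, C_S(a) is a subalgebra, so it contains all
   monomials a^j b^i, whose degrees grow only linearly in i and j.  Condition
   D(l) bounds the dimension of {x in C_S(a) | chi x < d} by l d: among more
   than l d such vectors, either at most l have the top degree d - 1 and the
   others are dependent by induction on d, or D(l) lets us replace one of the
   top-degree vectors by a combination of lower degree, decreasing their
   number.  The (N+1)^2 monomials with i, j <= N thus become dependent for N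
   large, and a dependence relation is a nonzero P with P(a, b) = 0. *)

Section LinearDependence.
Variables (K : fieldType) (V : lmodType K) (I : finType).
Implicit Types (P T : {set I}) (v : I -> V).

Definition dependent P v : Prop :=
  exists c : I -> K, (exists2 i, i \in P & c i != 0) /\ \sum_(i in P) c i *: v i = 0.

Lemma sumZ_subset P T (c : I -> K) v : T \subset P ->
  \sum_(i in P) (if i \in T then c i else 0) *: v i = \sum_(i in T) c i *: v i.
Proof.
move=> sTP; have -> : \sum_(i in T) c i *: v i = \sum_(i in P | i \in T) c i *: v i.
  by apply: eq_bigl => i; apply/idP/andP => [Ti | [] //]; rewrite (subsetP sTP).
by rewrite big_mkcondr; apply: eq_bigr => i _; case: ifP; rewrite ?scale0r.
Qed.

Lemma dependentS P T v : T \subset P -> dependent T v -> dependent P v.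
Proof.
move=> sTP [c [[i Ti ci] c0]].
exists (fun j => if j \in T then c j else 0); split.
  by exists i; rewrite ?Ti ?(subsetP sTP).
by rewrite sumZ_subset.
Qed.

Lemma dependent0 P v i : i \in P -> v i = 0 -> dependent P v.
Proof.
move=> Pi vi0; exists (fun j => (j == i)%:R); split.
  by exists i; rewrite ?eqxx ?oner_neq0.
rewrite (bigD1 i) //= vi0 scaler0 add0r big1 // => j /andP[_ /negbTE->].
by rewrite scale0r.
Qed.

(* If v i0 is replaced by a combination w in which v i0 occurs, a dependence
   among the new vectors either avoids w or can be solved back for v i0. *)
Lemma dependent_replace P T v i0 (alpha : I -> K) :
  T \subset P -> i0 \in T -> alpha i0 != 0 ->
  dependent P (fun i => if i == i0 then \sum_(j in T) alpha j *: v j else v i) ->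
  dependent P v.
Proof.
move=> sTP Ti0 ai0 [beta [[i1 Pi1 bi1] beta0]].
pose alphaP i := if i \in T then alpha i else 0.
exists (fun i => (if i == i0 then 0 else beta i) + beta i0 * alphaP i); split.
  have [b0|b0] := eqVneq (beta i0) 0.
    exists i1 => //; rewrite b0 mul0r addr0.
    by move: bi1; have [->|] := eqVneq i1 i0; rewrite ?b0.
  by exists i0; rewrite ?(subsetP sTP) // eqxx add0r /alphaP Ti0 mulf_neq0.
have Pi0 := subsetP sTP i0 Ti0.
rewrite -[RHS]beta0.
under eq_bigr do rewrite scalerDl -scalerA.
rewrite big_split /= -scaler_sumr sumZ_subset //.
rewrite (bigD1 i0 Pi0) [RHS](bigD1 i0 Pi0) /= !eqxx scale0r add0r addrC.
by congr (_ + _); apply: eq_bigr => i /andP[_ /negbTE->].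
Qed.
End LinearDependence.

Lemma zle_trans x y z : zle x y -> zle y z -> zle x z.
Proof. by case: x; case: y; case: z => //= ? ? ?; apply: Order.POrderTheory.le_trans. Qed.

Lemma zleD x y x' y' : zle x x' -> zle y y' -> zle (zadd x y) (zadd x' y').
Proof. by case: x; case: y; case: x'; case: y' => //= ? ? ? ? h1 h2; apply: Num.Theory.lerD. Qed.

Lemma zltSz x (n : nat) : zlt x (Some n.+1%:Z) = zle x (Some n%:Z).
Proof. by case: x => [m|] //=; rewrite /zlt /= (inj_eq (@Some_inj _)); lia. Qed.

Section DimensionBound.
Variables (K : fieldType) (S : lmodType K) (chi : S -> zbot) (B : pred S) (l : nat).
Hypothesis chi_None : forall x, chi x = None <-> x = 0.
Hypothesis B0 : 0 \in B.
Hypothesis B_lin : forall k x y, x \in B -> y \in B -> k *: x + y \in B.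
Hypothesis DB : condD chi B l.

Lemma B_sum (I : finType) (P : {set I}) (c : I -> K) (v : I -> S) :
  (forall i, i \in P -> v i \in B) -> \sum_(i in P) c i *: v i \in B.
Proof.
move=> vB; apply: (big_ind (fun x => x \in B)) => // [x y xB yB|i Pi].
  by rewrite -[x]scale1r B_lin.
by rewrite -[_ *: _]addr0 B_lin ?vB.
Qed.

Lemma chi_lt0_eq0 x : x \in B -> zlt (chi x) (Some 0) -> x = 0.
Proof.
move=> xB; apply: contraTeq => /(DB.1 x xB).
by case: (chi x) => [m|] //=; rewrite /zlt /= (inj_eq (@Some_inj _)); lia.
Qed.

Lemma chi_le_nat x : x \in B -> exists p : nat, zle (chi x) (Some p%:Z).
Proof.
move=> xB; have [->|/(DB.1 x xB)] := eqVneq x 0.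
  by exists 0%N; rewrite (proj2 (chi_None 0)).
by case: (chi x) => [m|] //= m_ge0; exists `|m|%N; rewrite gez0_abs.
Qed.

Lemma condD_set (I : finType) (T : {set I}) (v : I -> S) (d : int) :
  (forall i, i \in T -> v i \in B) -> (forall i, i \in T -> chi (v i) = Some d) ->
  (l < #|T|)%N ->
  exists alpha : I -> K, (exists2 i, i \in T & alpha i != 0) /\
    zlt (chi (\sum_(i in T) alpha i *: v i)) (Some d).
Proof.
move=> vB vd ltlT.
pose f (k : 'I_l.+1) : I := enum_val (widen_ord ltlT k).
have Tf k : f k \in T by apply: enum_valP.
have f_inj : injective f by move=> x y /enum_val_inj [] /val_inj.
have [||| beta [[k0 bk0]]] := DB.2 (v \o f).
- by move=> k; apply: vB.
- by move=> k; apply/eqP => /chi_None; rewrite /= vd.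
- by move=> k; rewrite /= !vd.
rewrite /= vd // => beta_lt.
exists (fun i => \sum_(k | f k == i) beta k); split.
  by exists (f k0) => //; rewrite (big_pred1 k0) // => k; rewrite /= (inj_eq f_inj).
rewrite (partition_big f (mem T) (fun k _ => Tf k)) in beta_lt.
congr (zlt (chi _) _): beta_lt; apply: eq_bigr => i _; rewrite scaler_suml.
by apply: eq_bigr => k /eqP <-.
Qed.

Definition dim_chi_lt_le (d : nat) : Prop :=
  forall (I : finType) (P : {set I}) (v : I -> S),
    (forall i, i \in P -> v i \in B) ->
    (forall i, i \in P -> zlt (chi (v i)) (Some d%:Z)) ->
    (l * d < #|P|)%N -> dependent P v.

Lemma dim_chi_lt_le0 : dim_chi_lt_le 0.
Proof.
move=> I P v vB v_lt; rewrite muln0 card_gt0 => /set0Pn[i Pi].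
exact: dependent0 Pi (chi_lt0_eq0 (vB i Pi) (v_lt i Pi)).
Qed.

Lemma dim_chi_lt_leS d : dim_chi_lt_le d -> dim_chi_lt_le d.+1.
Proof.
move=> IHd I P v vB v_lt card_P.
pose top (u : I -> S) := [set i in P | chi (u i) == Some d%:Z].
have topP u : top u \subset P by apply/subsetP => i; rewrite inE => /andP[].
have [n] := ubnP #|top v|; elim: n => // n IHn in v vB v_lt *.
rewrite ltnS => top_le.
have v_le i : i \in P -> zle (chi (v i)) (Some d%:Z) by rewrite -zltSz => /v_lt.
have [top_small | top_big] := leqP #|top v| l.
  apply: dependentS (subsetDl P (top v)) _; apply: IHd => [i|i|].
  - by rewrite inE => /andP[_ /vB].
  - by rewrite !inE => /andP[+ Pi]; rewrite Pi /zlt v_le.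
  - by rewrite cardsD (setIidPr (topP v)); lia.
have top_B i : i \in top v -> v i \in B by move/(subsetP (topP v))/vB.
have top_d i : i \in top v -> chi (v i) = Some d%:Z by rewrite inE => /andP[_ /eqP].
have [alpha [[i0 top_i0 a_i0] /andP[w_le w_ne]]] := condD_set top_B top_d top_big.
set w := \sum_(i in top v) _ in w_le w_ne.
apply: (dependent_replace (topP v) top_i0 a_i0); apply: IHn => [i Pi|i Pi|].
- by case: (i == i0); [exact: B_sum | apply: vB].
- by case: (i == i0); rewrite zltSz ?v_le.
apply: leq_trans top_le; apply: proper_card; apply/properP; split.
  apply/subsetP => i; rewrite !inE.
  have [-> /andP[_ /eqP w_d] | //] := eqVneq i i0.
  by rewrite w_d eqxx in w_ne.
by exists i0; rewrite // !inE eqxx (negbTE w_ne) andbF.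
Qed.

Lemma dim_chi_lt_leP d : dim_chi_lt_le d.
Proof. by elim: d => [|d]; [apply: dim_chi_lt_le0 | apply: dim_chi_lt_leS]. Qed.

End DimensionBound.

Lemma sum_coef_widen (R : nzRingType) (V : zmodType) (p : {poly R}) n
    (G : nat -> R -> V) :
  (size p <= n)%N -> (forall i, G i 0 = 0) ->
  \sum_(i < size p) G i p`_i = \sum_(i < n) G i p`_i.
Proof.
move=> le_p_n G0; rewrite (big_ord_widen _ (fun i => G i p`_i) le_p_n) big_mkcond.
apply: eq_bigr => i _.
by case: ltnP => // /(nth_default 0) ->; rewrite G0.
Qed.

Section UnitalAlgebra.
Variables (K : fieldType) (S : lmodType K) (mul : S -> S -> S) (one : S).
Hypothesis algS : is_unital_algebra mul one.

Lemma alg_mul0l z : mul 0 z = 0.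
Proof. by case: algS => linl _ _ _; have := linl (-1) 0 0 z; rewrite !scaleN1r !addNr. Qed.

Lemma alg_mul0r z : mul z 0 = 0.
Proof. by case: algS => _ linr _ _; have := linr (-1) z 0 0; rewrite !scaleN1r !addNr. Qed.

Lemma alg_mulZl k x z : mul (k *: x) z = k *: mul x z.
Proof. by case: algS => linl _ _ _; rewrite -[k *: x]addr0 linl alg_mul0l addr0. Qed.

Lemma alg_mul_suml (I : Type) (r : seq I) (P : pred I) (F : I -> S) z :
  mul (\sum_(i <- r | P i) F i) z = \sum_(i <- r | P i) mul (F i) z.
Proof.
case: algS => linl _ _ _; apply: (big_morph (mul^~ z)) => [x y|]; last exact: alg_mul0l.
by rewrite -[in LHS](scale1r x) linl scale1r.
Qed.

Lemma centralizerE a x : (x \in centralizer mul a) = (mul x a == mul a x).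
Proof. by []. Qed.

Lemma centralizer0 a : 0 \in centralizer mul a.
Proof. by rewrite centralizerE alg_mul0l alg_mul0r. Qed.

Lemma centralizer_lin a k x y : x \in centralizer mul a -> y \in centralizer mul a ->
  k *: x + y \in centralizer mul a.
Proof. by case: algS => linl linr _ _; rewrite !centralizerE linl linr => /eqP-> /eqP->. Qed.

Lemma centralizer_mul a x y : nucleus mul a ->
  x \in centralizer mul a -> y \in centralizer mul a -> mul x y \in centralizer mul a.
Proof.
move=> a_nuc; rewrite !centralizerE => /eqP xa /eqP ya.
by have [e1 e2 e3] := a_nuc x y; rewrite e3 ya -e2 xa e1.
Qed.

Lemma centralizer_npow a x i : nucleus mul a ->
  x \in centralizer mul a -> npow mul one x i \in centralizer mul a.
Proof.
move=> a_nuc xa; elim: i => [|i IHi] /=; last exact: centralizer_mul.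
by case: algS => _ _ mul1x mulx1; rewrite centralizerE mul1x mulx1.
Qed.

Lemma chi_one (chi : S -> zbot) : pseudo_degree mul chi -> zle (chi one) (Some 0).
Proof.
case: algS => _ _ mul1x _ [_ chi_mul _]; have := chi_mul one one; rewrite mul1x.
by case: (chi one) => [m|] //= []; lia.
Qed.

Lemma chi_npow (chi : S -> zbot) x (p i : nat) : pseudo_degree mul chi ->
  zle (chi x) (Some p%:Z) -> zle (chi (npow mul one x i)) (Some (i * p)%N%:Z).
Proof.
move=> chiS x_p; elim: i => [|i IHi] /=; first exact: chi_one.
by case: chiS => _ -> _; rewrite mulSn PoszD; exact: (zleD x_p IHi).
Qed.

Lemma peval1_poly n (f : nat -> K) x :
  peval1 mul one (\poly_(j < n) f j) x = \sum_(j < n) f j *: npow mul one x j.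
Proof.
rewrite /peval1 (sum_coef_widen (n := n) (G := fun j c => c *: npow mul one x j)) ?size_poly //.
  by apply: eq_bigr => j _; rewrite coef_poly ltn_ord.
by move=> j; rewrite scale0r.
Qed.

Lemma peval2_poly n (c : nat -> nat -> K) x y :
  peval2 mul one (\poly_(i < n) \poly_(j < n) c i j) x y =
  \sum_(i < n) \sum_(j < n) c i j *: mul (npow mul one x j) (npow mul one y i).
Proof.
pose G i f := mul (peval1 mul one f x) (npow mul one y i).
rewrite /peval2 (sum_coef_widen (n := n) (G := G)) ?size_poly //.
  apply: eq_bigr => i _; rewrite /G coef_poly ltn_ord peval1_poly alg_mul_suml.
  by apply: eq_bigr => j _; rewrite alg_mulZl.
by move=> i; rewrite /G /peval1 size_poly0 big_ord0 alg_mul0l.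
Qed.

End UnitalAlgebra.

Theorem corollary2p9 (K : fieldType) (S : lmodType K)
  (mul : S -> S -> S) (one : S) (chi : S -> zbot) (a b : S) (l : nat) :
  ~~ (2 \in [pchar K])%N ->
  is_unital_algebra mul one ->
  pseudo_degree mul chi ->
  nucleus mul a ->
  (0 < l)%N ->
  condD chi (centralizer mul a) l ->
  b \in centralizer mul a ->
  left_nucleus mul b ->
  exists P : {poly {poly K}}, P != 0 /\ peval2 mul one P a b = 0.
Proof.
move=> _ algS chiS a_nuc _ DB b_C _.
have [chi_None chi_mul _] := chiS.
have a_C : a \in centralizer mul a by rewrite centralizerE.
have [p a_p] := chi_le_nat chi_None DB a_C.
have [q b_q] := chi_le_nat chi_None DB b_C.
(* With this N, the (N+1)^2 monomials outnumber l (N (p + q) + 1). *)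
pose N := (l * (p + q) + l)%N.
pose v (x : 'I_N.+1 * 'I_N.+1) := mul (npow mul one a x.2) (npow mul one b x.1).
have v_C x : v x \in centralizer mul a.
  by apply: centralizer_mul => //; apply: centralizer_npow.
have v_lt x : zlt (chi (v x)) (Some (N * (p + q)).+1%:Z).
  case: x => i j; rewrite zltSz chi_mul.
  apply: zle_trans (zleD (chi_npow algS j chiS a_p) (chi_npow algS i chiS b_q)) _ => /=.
  by have := ltn_ord i; have := ltn_ord j; nia.
have card_v : (l * (N * (p + q)).+1 < #|[set: 'I_N.+1 * 'I_N.+1]|)%N.
  by rewrite cardsT card_prod card_ord; nia.
have [c [[[i0 j0] _ c0] c_v]] := dim_chi_lt_leP chi_None (centralizer0 algS a)
  (centralizer_lin (a := a) algS) DB (fun x _ => v_C x) (fun x _ => v_lt x) card_v.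
exists (\poly_(i < N.+1) \poly_(j < N.+1) c (inord i, inord j)); split.
  apply: contra c0 => /eqP/(congr1 (fun P : {poly {poly K}} => P`_i0`_j0)).
  by rewrite coef_poly ltn_ord coef_poly ltn_ord !inord_val !coef0 => ->.
rewrite (peval2_poly algS) pair_bigA -[RHS]c_v (eq_bigl _ _ (@in_setT _)).
by apply: eq_bigr => -[i j] _; rewrite !inord_val.
Qed.
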